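(* Consider a Time-and-Level-of-Use (TLOU) tariff for a single time frame $t$, given by a booking fee $K>0$, a step-wise non-increasing lower price function $\pi^L:[0,\infty)\to\mathbb{R}$ with finite set of breakpoints $C^L$, and a step-wise non-decreasing higher price function $\pi^H:[0,\infty)\to\mathbb{R}$ with finite set of breakpoints $C^H$, where $\pi^L(0)=\pi^H(0)=\pi_0(t)$. Let the user's consumption be a discrete random variable with finite support given by scenarios $\omega\in\Omega_t$, with consumption levels $x_\omega\ge 0$ and probabilities $p_\omega>0$. For a booked capacity $c\ge 0$ let $$\mathcal{C}(c)=K\cdot c+\sum_{\omega\in\Omega_t} x_\omega\, p_\omega\left(\pi^L(c)\,\mathbb{1}[x_\omega\le c]+\pi^H(c)\,\mathbb{1}[x_\omega>c]\right)$$ be the user's expected cost. Then any capacity $c^\ast\ge 0$ minimizing $\mathcal{C}$ over $c\ge 0$ (an optimal booked capacity for the user at time frame $t$) belongs to the finite set $$S_t=\{0\}\cup C^L\cup\{x_\omega:\omega\in\Omega_t\}.$$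
   Context: Under TLOU, a user books a capacity $c\ge0$ for a time frame $t$; if the realized consumption $x$ satisfies $x\le c$ the total cost is $K c+\pi^L(c)x$, and otherwise it is $Kc+\pi^H(c)x$. The price functions are step functions: for breakpoints $c_1<c_2<\dots<c_m$ in $C^L$ (all positive), $\pi^L$ is constant on $[0,c_1)$ (equal to $\pi_0(t)$, the Time-of-Use price of the time frame) and on each interval $[c_j,c_{j+1})$ and $[c_m,\infty)$, with its values non-increasing from one step to the next; $\pi^H$ is defined analogously with breakpoints $C^H$ and values non-decreasing from one step to the next. The notation $\mathbb{1}[\cdot]$ denotes the indicator of the condition. *)

From HB Require Import structures.
From mathcomp Require Import all_boot all_order all_algebra.
Set Implicit Arguments. Unset Strict Implicit. Unset Printing Implicit Defensive.
Import Order.TTheory GRing.Theory Num.Theory.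
Local Open Scope ring_scope.

(* A step function on [0,oo) given by strictly increasing breakpoints
   C = [:: c_1; ...; c_m] and values v = [:: v_0; v_1; ...; v_m]:
   it equals v_0 on [0, c_1), v_j on [c_j, c_{j+1}) and v_m on [c_m, oo).
   The index of the step containing c is the number of breakpoints <= c. *)
Definition stepfun (R : realFieldType) (C v : seq R) (c : R) : R :=
  nth 0 v (count (fun b => b <= c) C).

Definition breakpoints_ok (R : realFieldType) (C v : seq R) : Prop :=
  [/\ sorted <%R C, all (fun b => 0 < b) C & size v = (size C).+1].

Definition ind (R : realFieldType) (b : bool) : R := (b : nat)%:R.

Definition tlou_cost (R : realFieldType) (Omega : finType) (K : R)
    (CL vL CH vH : seq R) (x p : Omega -> R) (c : R) : R :=
  K * c + \sum_(w : Omega) x w * p w *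
      (stepfun CL vL c * ind R (x w <= c) + stepfun CH vH c * ind R (c < x w)).

Definition candidates (R : realFieldType) (Omega : finType) (CL : seq R)
    (x : Omega -> R) : seq R :=
  0 :: CL ++ [seq x w | w <- enum Omega].

(* Let d > 0 be a capacity outside S_t.  Since S_t is finite and d is not in
   it, there is c with 0 <= c < d such that no breakpoint of pi^L and no
   consumption level lies in [c, d).  Lowering the capacity from d to c keeps
   pi^L and every indicator unchanged, does not increase pi^H (which is
   non-decreasing) and strictly lowers the booking fee, so d is not optimal. *)
From HB Require Import structures.
From mathcomp Require Import all_boot all_order all_algebra.
Import Order.TTheory GRing.Theory Num.Theory.
Local Open Scope ring_scope.

Section Breakpoints.

Context {R : realFieldType}.

Lemma exists_gap_below (s : seq R) {lo c' : R} : lo < c' ->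
  exists c, [/\ lo <= c, c < c' &
    {in s, forall b, b != c' -> (b <= c) = (b <= c')}].
Proof.
move=> lo_c'; elim: s => [|a s [c [lo_c c_c' gap]]].
  by exists lo; split.
have [a_c'|c'_a] := ltP a c'.
  exists (Num.max c a); split; [by rewrite le_max lo_c | by rewrite gt_max c_c' |].
  move=> b; rewrite in_cons => /predU1P[-> _|b_s b_c']; first by rewrite le_max lexx orbT ltW.
  rewrite le_max gap //; apply/idP/idP => [/orP[//|b_a]|->//].
  exact: le_trans b_a (ltW a_c').
exists c; split => // b; rewrite in_cons => /predU1P[-> a_c'|]; last exact: gap.
have c'_lt_a : c' < a by rewrite lt_def a_c'.
by rewrite !leNgt c'_lt_a (lt_trans c_c' c'_lt_a).
Qed.

Lemma stepfun_eq_in {C : seq R} (v : seq R) {c c' : R} :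
  {in C, forall b, (b <= c) = (b <= c')} -> stepfun C v c = stepfun C v c'.
Proof. by move=> same; rewrite /stepfun (eq_in_count same). Qed.

Lemma stepfun_homo (C v : seq R) (c c' : R) :
  sorted <=%R v -> size v = (size C).+1 -> c <= c' ->
  stepfun C v c <= stepfun C v c'.
Proof.
move=> sorted_v size_v c_c'; rewrite /stepfun.
apply: (sorted_leq_nth le_trans lexx) => //; try by rewrite inE size_v ltnS count_size.
by apply: sub_count => b /= b_c; apply: le_trans b_c c_c'.
Qed.

End Breakpoints.

Lemma tlou_cost_lt (R : realFieldType) (Omega : finType) (K : R)
    (CL vL CH vH : seq R) (x p : Omega -> R) (c c' : R) :
  0 < K -> c < c' -> sorted <=%R vH -> size vH = (size CH).+1 ->
  (forall w, 0 <= x w) -> (forall w, 0 <= p w) ->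
  {in CL, forall b, (b <= c) = (b <= c')} ->
  (forall w, (x w <= c) = (x w <= c')) ->
  tlou_cost K CL vL CH vH x p c < tlou_cost K CL vL CH vH x p c'.
Proof.
move=> K_gt0 c_c' sorted_vH size_vH x_ge0 p_ge0 same_CL same_x.
rewrite /tlou_cost (stepfun_eq_in vL same_CL); apply: ltr_leD; first by rewrite ltr_pM2l.
apply: ler_sum => w _; rewrite !ltNge same_x.
rewrite ler_wpM2l ?mulr_ge0 // lerD2l ler_wpM2r ?ler0n //.
exact: stepfun_homo (ltW c_c').
Qed.

Theorem proposition1 (R : realFieldType) (Omega : finType)
    (K pi0 : R) (CL vL CH vH : seq R) (x p : Omega -> R) (cstar : R) :
  0 < K ->
  breakpoints_ok CL vL -> sorted >=%R vL ->
  breakpoints_ok CH vH -> sorted <=%R vH ->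
  nth 0 vL 0 = pi0 -> nth 0 vH 0 = pi0 ->
  (forall w, 0 <= x w) -> (forall w, 0 < p w) ->
  0 <= cstar ->
  (forall c, 0 <= c -> tlou_cost K CL vL CH vH x p cstar <= tlou_cost K CL vL CH vH x p c) ->
  cstar \in candidates CL x.
Proof.
move=> K_gt0 _ _ [_ _ size_vH] sorted_vH _ _ x_ge0 p_gt0 cstar_ge0 optimal.
apply/negPn/negP; rewrite /candidates inE negb_or mem_cat negb_or.
case/and3P=> cstar_neq0 cstar_notin_CL cstar_notin_x.
have cstar_gt0 : 0 < cstar by rewrite lt_def cstar_neq0.
have [c [c_ge0 c_lt_cstar gap]] :=
  exists_gap_below (CL ++ [seq x w | w <- enum Omega]) cstar_gt0.
have same_CL : {in CL, forall b, (b <= c) = (b <= cstar)}.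
  move=> b b_CL; apply: gap; first by rewrite mem_cat b_CL.
  by apply: contraNneq cstar_notin_CL => <-.
have same_x : forall w, (x w <= c) = (x w <= cstar).
  have x_w_in w : x w \in [seq x w | w <- enum Omega] by rewrite map_f ?mem_enum.
  move=> w; apply: gap; first by rewrite mem_cat x_w_in orbT.
  by apply: contraNneq cstar_notin_x => <-.
have := optimal c c_ge0; apply/negP; rewrite -ltNge.
by apply: tlou_cost_lt => // w; apply: ltW.
Qed.
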